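(* For $n\geq 5$, in the Waiter-Client game on $K_n$, Waiter can force Client to build a red Hamilton path within $n-1$ rounds such that one of its endpoints is incident with at most two blue edges.
   Context: Waiter-Client game on $K_n$: in each round Waiter offers two free edges of $K_n$, Client colors one of them red and the other becomes blue. *)

From mathcomp Require Import all_boot.
Set Implicit Arguments. Unset Strict Implicit. Unset Printing Implicit Defensive.

(* Vertices of K_n are 'I_n; an edge of K_n is a 2-element subset of 'I_n.
   A game position is a pair (R, B) of sets of edges: red and blue edges. *)
Definition is_edge (n : nat) (e : {set 'I_n}) : bool := #|e| == 2.

Definition free_edge (n : nat) (R B : {set {set 'I_n}}) (e : {set 'I_n}) : bool :=
  is_edge e && (e \notin R) && (e \notin B).

Definition red_adj (n : nat) (R : {set {set 'I_n}}) : rel 'I_n :=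
  fun x y => [set x; y] \in R.

Definition blue_deg (n : nat) (B : {set {set 'I_n}}) (v : 'I_n) : nat :=
  #|[set e in B | v \in e]|.

Definition goal (n : nat) (R B : {set {set 'I_n}}) : Prop :=
  exists (x : 'I_n) (s : seq 'I_n),
    [/\ uniq (x :: s), size (x :: s) = n, path (red_adj R) x s &
        (blue_deg B x <= 2 \/ blue_deg B (last x s) <= 2)].

(* In a round, Waiter offers two distinct free edges
   e1, e2; Client colours one red and the other becomes blue. *)
Fixpoint waiter_wins (n k : nat) (R B : {set {set 'I_n}}) : Prop :=
  match k with
  | 0 => goal R B
  | k'.+1 => goal R B \/
      exists e1 e2 : {set 'I_n},
        [/\ free_edge R B e1, free_edge R B e2, e1 != e2,
            waiter_wins k' (e1 |: R) (e2 |: B) &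
            waiter_wins k' (e2 |: R) (e1 |: B)]
  end.

From mathcomp Require Import all_boot.
Set Implicit Arguments. Unset Strict Implicit. Unset Printing Implicit Defensive.

(* Waiter maintains a red path P and a hub vertex a in the interior of P such
   that every red edge lies inside P and every blue edge lies inside P or
   contains a.  A vertex v outside P then meets at most one blue edge, namely
   av.  Waiter offers the two edges joining v to the ends of P: whichever one
   Client colours red extends P to a path ending at v, while the other, now
   blue, joins the two ends of the new path; so v gains a single blue edge and
   carries at most two.  The invariant is set up in two opening rounds: with
   a, x, y, b, c distinct, Waiter offers ax, ay and then ab, ac, which leaves a
   red path of length two through a and both blue edges at a.  The remaining
   n - 3 rounds extend the path to a Hamilton path. *)

Lemma eq_set2r (T : finType) (a b c : T) :
  b != a -> ([set a; b] == [set a; c]) = (b == c).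
Proof.
move=> b_a; apply/eqP/eqP => [E|-> //].
have /set2P[b_eq_a|//] : b \in [set a; c] by rewrite -E set22.
by rewrite b_eq_a eqxx in b_a.
Qed.

Lemma subset_set2 (T : finType) (p : seq T) (y z : T) :
  y \in p -> z \in p -> {subset [set y; z] <= p}.
Proof. by move=> y_p z_p w /set2P[]->. Qed.

Lemma head_neq_last (T : eqType) (x y : T) (s : seq T) :
  uniq (x :: s) -> y \in s -> x != last x s.
Proof.
case: s => [//|z s] /= /andP[x_notin _] _.
by apply: contraNneq x_notin => ->; apply: mem_last.
Qed.

Lemma exists_notin n (p : seq 'I_n) : size p < n -> exists v, v \notin p.
Proof.
move=> size_p; case/boolP: [exists v, v \notin p] => [/existsP //|].
rewrite negb_exists => /forallP all_in; move: size_p.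
rewrite ltnNge -{1}(size_enum_ord n) uniq_leq_size ?enum_uniq //.
by move=> v _; apply/negbNE/all_in.
Qed.

Lemma red_adj_subset n (R R' : {set {set 'I_n}}) :
  R \subset R' -> subrel (red_adj R) (red_adj R').
Proof. by move=> /subsetP R_R' x y; apply: R_R'. Qed.

Lemma blue_deg_setU1 n (B : {set {set 'I_n}}) e v :
  blue_deg (e |: B) v <= (blue_deg B v).+1.
Proof.
apply: leq_trans (_ : _ <= #|e |: [set f in B | v \in f]|) _.
  apply: subset_leq_card; apply/subsetP => f.
  by rewrite !inE => /andP[/orP[->|->] ->]; rewrite ?orbT.
by rewrite cardsU1 -add1n leq_add2r leq_b1.
Qed.

Lemma blue_deg_le_card n (B : {set {set 'I_n}}) v : blue_deg B v <= #|B|.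
Proof. by apply: subset_leq_card; apply/subsetP => e; rewrite inE => /andP[]. Qed.

Section HubPath.

Variables (n : nat) (a : 'I_n).

Record path_position (R B : {set {set 'I_n}}) (x : 'I_n) (s : seq 'I_n) : Prop := {
  position_uniq : uniq (x :: s);
  position_path : path (red_adj R) x s;
  hub_in_path : a \in s;
  hub_neq_last : a != last x s;
  red_in_path : forall e, e \in R -> {subset e <= x :: s};
  blue_in_path_or_hub : forall e, e \in B ->
    {subset e <= x :: s} \/ exists w, e = [set a; w] }.

Section Position.

Variables (R B : {set {set 'I_n}}) (x : 'I_n) (s : seq 'I_n).
Hypothesis pos : path_position R B x s.

Lemma hub_in_cons : a \in x :: s.
Proof. by rewrite inE (hub_in_path pos) orbT. Qed.

Lemma head_neq_hub : x != a.
Proof.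
have /andP[x_notin _] := position_uniq pos.
by apply: contraNneq x_notin => ->; apply: hub_in_path pos.
Qed.

Lemma outside_neq_hub (v : 'I_n) : v \notin x :: s -> v != a.
Proof. by move=> v_out; apply: contraNneq v_out => ->; apply: hub_in_cons. Qed.

Lemma blue_deg_outside (v : 'I_n) : v \notin x :: s -> blue_deg B v <= 1.
Proof.
move=> v_out; rewrite /blue_deg -(cards1 [set a; v]); apply: subset_leq_card.
apply/subsetP => e; rewrite !inE => /andP[/(blue_in_path_or_hub pos)[e_p|[w ->]] v_e].
  by rewrite (e_p _ v_e) in v_out.
case/set2P: v_e => [v_a|<-//].
by move: (outside_neq_hub v_out); rewrite v_a eqxx.
Qed.

Lemma outside_edge_free (y v : 'I_n) :
  y \in x :: s -> y != a -> v \notin x :: s -> free_edge R B [set v; y].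
Proof.
move=> y_p y_a v_out.
have v_y : v != y by apply: contraNneq v_out => ->.
rewrite /free_edge /is_edge cards2 v_y /=; apply/andP; split.
  by apply: contra v_out => /(red_in_path pos); apply; apply: set21.
apply/negP => /(blue_in_path_or_hub pos)[/(_ v (set21 _ _))|[w vy_aw]].
  by apply/negP.
have /set2P[a_v|a_y] : a \in [set v; y] by rewrite vy_aw set21.
  by move: (outside_neq_hub v_out); rewrite a_v eqxx.
by rewrite a_y eqxx in y_a.
Qed.

Lemma offered_edges_neq (v : 'I_n) :
  v \notin x :: s -> [set v; x] != [set v; last x s].
Proof.
move=> v_out; rewrite eq_set2r.
  exact: head_neq_last (position_uniq pos) (hub_in_path pos).
by apply: contraNneq v_out => ->; apply: mem_head.
Qed.

Lemma prepend_position (v : 'I_n) : v \notin x :: s ->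
  path_position ([set v; x] |: R) ([set v; last x s] |: B) v (x :: s).
Proof.
move=> v_out; have [uniq_p path_p hub_s hub_last red_p blue_p] := pos.
have old_in w : w \in x :: s -> w \in v :: x :: s by move=> w_p; rewrite in_cons w_p orbT.
split => //.
- by rewrite cons_uniq v_out.
- rewrite /= {1}/red_adj setU11 /=.
  by apply: sub_path path_p; apply: red_adj_subset; apply: subsetUr.
- exact: hub_in_cons.
- move=> e /setU1P[->|/red_p e_p]; last by move=> w /e_p /old_in.
  exact: subset_set2 (mem_head _ _) (old_in _ (mem_head _ _)).
- move=> e /setU1P[->|/blue_p[e_p|]]; [left | by left => w /e_p /old_in | by right].
  exact: subset_set2 (mem_head _ _) (old_in _ (mem_last _ _)).
Qed.

Lemma append_position (v : 'I_n) : v \notin x :: s ->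
  path_position ([set v; last x s] |: R) ([set v; x] |: B) x (rcons s v).
Proof.
move=> v_out; have [uniq_p path_p hub_s hub_last red_p blue_p] := pos.
have mem_p w : (w \in x :: rcons s v) = (w == v) || (w \in x :: s).
  by rewrite -rcons_cons mem_rcons.
have v_in : v \in x :: rcons s v by rewrite mem_p eqxx.
have old_in w : w \in x :: s -> w \in x :: rcons s v by rewrite mem_p => ->; rewrite orbT.
split.
- by rewrite -rcons_cons rcons_uniq v_out.
- rewrite rcons_path /red_adj (setUC [set last x s]) setU11 andbT.
  by apply: sub_path path_p; apply: red_adj_subset; apply: subsetUr.
- by rewrite mem_rcons inE hub_s orbT.
- by rewrite last_rcons eq_sym outside_neq_hub.
- move=> e /setU1P[->|/red_p e_p]; last by move=> w /e_p /old_in.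
  exact: subset_set2 v_in (old_in _ (mem_last _ _)).
- move=> e /setU1P[->|/blue_p[e_p|]]; [left | by left => w /e_p /old_in | by right].
  exact: subset_set2 v_in (mem_head _ _).
Qed.

End Position.

Lemma waiter_wins_from_position k R B x s :
  path_position R B x s -> size (x :: s) + k = n ->
  blue_deg B x <= 2 \/ blue_deg B (last x s) <= 2 -> waiter_wins k R B.
Proof.
elim: k R B x s => [|k IH] R B x s pos size_p light.
  exists x, s; split => //; first exact: position_uniq pos.
    by rewrite -[RHS]size_p addn0.
  exact: position_path pos.
have [v v_out] : exists v : 'I_n, v \notin x :: s.
  by apply: exists_notin; rewrite -[n in _ < n]size_p addnS ltnS leq_addr.
have light_v e : blue_deg (e |: B) v <= 2.
  by rewrite (leq_trans (blue_deg_setU1 _ _ _)) // ltnS (blue_deg_outside pos v_out).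
have last_a : last x s != a by rewrite eq_sym (hub_neq_last pos).
right; exists [set v; x], [set v; last x s]; split.
- exact: (outside_edge_free pos (mem_head x s) (head_neq_hub pos) v_out).
- exact: (outside_edge_free pos (mem_last x s) last_a v_out).
- exact: (offered_edges_neq pos v_out).
- apply: IH (prepend_position pos v_out) _ (or_introl (light_v _)).
  by rewrite -[RHS]size_p addnS.
- apply: IH (append_position pos v_out) _ _; last by rewrite last_rcons; right.
  by rewrite -[RHS]size_p /= size_rcons addnS.
Qed.

Lemma opening_position x b y c : uniq [:: x; a; b] ->
  path_position ([set a; b] |: [set [set a; x]]) ([set a; c] |: [set [set a; y]])
    x [:: a; b].
Proof.
move=> uniq_p; split => //.
- by rewrite /= /red_adj (setUC [set x]) !inE !eqxx orbT.
- exact: mem_head.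
- by case/and3P: uniq_p => _; rewrite inE.
- by move=> e; rewrite !inE => /orP[]/eqP-> w /set2P[]->; rewrite !inE eqxx ?orbT.
- by move=> e; rewrite !inE => /orP[]/eqP->; right; eexists.
Qed.

Lemma waiter_wins_after_opening k x b y c : uniq [:: x; a; b] -> n = k.+3 ->
  waiter_wins k ([set a; b] |: [set [set a; x]]) ([set a; c] |: [set [set a; y]]).
Proof.
move=> uniq_p n_eq; apply: waiter_wins_from_position (opening_position _ _ uniq_p) _ _.
  by rewrite [RHS]n_eq.
left; rewrite (leq_trans (blue_deg_le_card _ _)) //.
by rewrite cardsU1 cards1 addn1 ltnS leq_b1.
Qed.

Lemma opening_round k x y b c : uniq [:: a; x; y; b; c] -> n = k.+3 ->
  waiter_wins k.+1 [set [set a; x]] [set [set a; y]].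
Proof.
rewrite /= !inE !negb_or.
move=> /andP[/and4P[a_x _ a_b a_c] /andP[/and3P[_ x_b x_c]]].
move=> /andP[/andP[y_b y_c] /andP[b_c _]] n_eq; right; exists [set a; b], [set a; c].
rewrite /free_edge /is_edge !cards2 a_b a_c !inE !eq_set2r 1?eq_sym //.
rewrite !(eq_sym b) !(eq_sym c) x_b x_c y_b y_c b_c.
split => //; apply: waiter_wins_after_opening n_eq.
all: by rewrite /= !inE negb_or (eq_sym x a) a_x ?x_b ?x_c ?a_b ?a_c.
Qed.

End HubPath.

Theorem lemma3p1 (n : nat) (hn : 5 <= n) :
  waiter_wins (n - 1) (set0 : {set {set 'I_n}}) set0.
Proof.
case: n hn => [|[|[|[|[|m]]]]] // _; rewrite subSS subn0.
pose v i : 'I_(m.+4.+1) := inord i.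
have [uniq_v uniq_v'] :
    uniq [:: v 0; v 1; v 2; v 3; v 4] /\ uniq [:: v 0; v 2; v 1; v 3; v 4].
  by split; rewrite /= !inE -!(inj_eq val_inj) /= !inordK.
have [v01 v02 v12] : [/\ v 0 != v 1, v 0 != v 2 & v 1 != v 2].
  by split; rewrite -(inj_eq val_inj) /= !inordK.
right; exists [set v 0; v 1], [set v 0; v 2].
rewrite !setU0 /free_edge /is_edge !cards2 !inE v01 v02 eq_set2r 1?eq_sym //.
split => //; first exact: (opening_round uniq_v (erefl _)).
exact: (opening_round uniq_v' (erefl _)).
Qed.
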